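(* In the M/M/1 setting below, for every belief distribution $\Lambda$ satisfying the standing assumptions, $q^S_m\le q^S_e$.
   Context: Setting: an M/M/1 queue with true (deterministic) Poisson arrival rate $\lambda>0$ and exponential service times with rate $\mu$, so the expected time in system at effective arrival rate $x\in[0,\mu)$ is $W(x)=1/(\mu-x)$. Each served customer receives reward $R$ and incurs waiting cost $C>0$ per unit time, with $R\ge C/\mu$. Customers' beliefs about the arrival rate are described by a non-degenerate nonnegative random variable $\Lambda$ whose support has minimum $\lambda_{\min}$ and maximum $\lambda_{\max}$, with $0\le\lambda_{\min}<\lambda<\lambda_{\max}<\mu$. Shared-belief quantities, for $q\in[0,1]$: the revenue rate $\mathrm{Rev}^S(q)=q\lambda\,\mathbb{E}[R-C\,W(q\Lambda)]$ (strictly concave on $[0,1]$); $q^S_m$ is the maximizer of $\mathrm{Rev}^S$ over $q\in[0,1]$. The individual (no-fee) equilibrium $q^S_e$ is defined as follows: if $R-C\,\mathbb{E}[W(\Lambda)]\ge0$ then $q^S_e=1$; otherwise $q^S_e$ is the unique $q\in[0,1]$ with $C\,\mathbb{E}[W(q\Lambda)]=R$. *)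

(* beliefs are a real random variable on an abstract probability space. *)
From HB Require Import structures.
From mathcomp Require Import all_boot all_order all_algebra.
From mathcomp Require Import all_classical all_reals all_analysis.
Set Implicit Arguments. Unset Strict Implicit. Unset Printing Implicit Defensive.
Import Order.TTheory GRing.Theory Num.Theory.
Local Open Scope classical_set_scope.
Local Open Scope ring_scope.

Section mm1.
Context {d : measure_display} {T : measurableType d} {R : realType}.

(* expected time in system of an M/M/1 queue at effective arrival rate x *)
Definition Wsys (mu x : R) : R := 1 / (mu - x).

Definition rv_support (P : probability T R) (X : {RV P >-> R}) : set R :=
  [set x | forall e : R, 0 < e ->
    (0 < distribution P X `](x - e)%R, (x + e)%R[)%E].

Definition EW (P : probability T R) (X : {RV P >-> R}) (mu q : R) : R :=
  fine ('E_P[fun w => Wsys mu (q * X w)%R])%E.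

Definition RevS (P : probability T R) (X : {RV P >-> R}) (lam mu Rw C q : R) : R :=
  q * lam * fine ('E_P[fun w => (Rw - C * Wsys mu (q * X w))%R])%E.

Definition is_qSm (P : probability T R) (X : {RV P >-> R}) (lam mu Rw C q : R) : Prop :=
  0 <= q <= 1 /\
  forall q' : R, 0 <= q' <= 1 -> RevS X lam mu Rw C q' <= RevS X lam mu Rw C q.

Definition is_qSe (P : probability T R) (X : {RV P >-> R}) (mu Rw C q : R) : Prop :=
  (0 <= Rw - C * EW X mu 1 /\ q = 1) \/
  (Rw - C * EW X mu 1 < 0 /\ 0 <= q <= 1 /\ C * EW X mu q = Rw).

End mm1.

From HB Require Import structures.
From mathcomp Require Import all_boot all_order all_algebra.
From mathcomp Require Import all_classical all_reals all_analysis.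
From mathcomp Require Import measurable_realfun ring lra.
Import Order.TTheory GRing.Theory Num.Theory numFieldNormedType.Exports.
Local Open Scope classical_set_scope.
Local Open Scope ring_scope.

(* Unless q^S_e = 1, the equilibrium condition C E[W(q^S_e Λ)] = R gives
   Rev^S(q^S_e) = 0. Moreover C E[W(Λ)] > R >= C/μ, so Λ is not almost surely
   0, and then q ↦ E[W(qΛ)] is strictly increasing on [0,1]: pointwise,
   W(qx) - W(q'x) >= (q - q') (μ - λ_max)/μ (W(x) - 1/μ) for q' <= q and
   0 <= x <= λ_max. Hence every q > q^S_e has R - C E[W(qΛ)] < 0, i.e. a
   negative revenue rate, and cannot be a maximizer.
   The support hypotheses are what make the expectations finite: Λ lies in
   [λ_min, λ_max] almost surely, because every compact set avoiding the
   support is covered by finitely many null intervals. *)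

Section negligible_off_support.
Context {R : realType} (mu : {measure set R -> \bar R}).

Definition in_support (x : R) :=
  forall e : R, 0 < e -> (0 < mu `](x - e)%R, (x + e)%R[%classic)%E.

Lemma null_itv_of_not_in_support {x} :
  ~ in_support x -> exists2 e : R, 0 < e & mu `](x - e), (x + e)[%classic = 0%E.
Proof.
move=> /existsNP[e /not_implyP[e0 /negP]]; rewrite -leNgt => mu_le0.
by exists e => //; apply/eqP; rewrite eq_le mu_le0 measure_ge0.
Qed.

Lemma compact_negligible_off_support (K : set R) :
  compact K -> (forall x, K x -> ~ in_support x) -> mu.-negligible K.
Proof.
move=> cK Kout.
have /choice[e eP] : forall x, exists e : R,
    K x -> 0 < e /\ mu `](x - e), (x + e)[%classic = 0%E.
  move=> x; have [Kx|nKx] := pselect (K x); last by exists 0.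
  by have [e e0 mue] := null_itv_of_not_in_support (Kout _ Kx); exists e.
move: cK; rewrite compact_cover.
move=> /(_ R K (fun x => `](x - e x), (x + e x)[%classic)) [||D sD KD].
- by move=> x _; exact: interval_open.
- move=> x Kx; exists x => //=; have [e0 _] := eP x Kx.
  by rewrite in_itv/= gtrBl ltrDl e0.
apply: (negligibleS KD); rewrite /cover bigcup_fset big_seq.
elim/big_ind: _ => [|A B|x xD]; [exact: negligible_set0|exact: negligibleU|].
apply/negligibleP; first exact: measurable_itv.
by have [] := eP x (set_mem (sD _ xD)).
Qed.

Lemma negligible_itvoy_off_support b :
  (forall x, in_support x -> x <= b) -> mu.-negligible `]b, +oo[%classic.
Proof.
move=> supp_le; rewrite itv_bndy_bigcup_BRight; apply: negligible_bigcup => n.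
rewrite itv_open_bnd_bigcup; apply: negligible_bigcup => m.
apply: compact_negligible_off_support; first exact: segment_compact.
move=> x /=; rewrite in_itv/= => /andP[bx _] /supp_le; apply/negP; rewrite -ltNge.
by apply: lt_le_trans bx; rewrite ltrDl invr_gt0 ltr0n.
Qed.

Lemma negligible_itvNyo_off_support b :
  (forall x, in_support x -> b <= x) -> mu.-negligible `]-oo, b[%classic.
Proof.
move=> supp_ge; rewrite itvNy_bnd_bigcup_BLeft; apply: negligible_bigcup => n.
rewrite itv_bnd_open_bigcup; apply: negligible_bigcup => m.
apply: compact_negligible_off_support; first exact: segment_compact.
move=> x /=; rewrite in_itv/= => /andP[_ xb] /supp_ge; apply/negP; rewrite -ltNge.
by apply: le_lt_trans xb _; rewrite gtrBl invr_gt0 ltr0n.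
Qed.

End negligible_off_support.

Lemma rv_support_ae_itv {d} {T : measurableType d} {R : realType}
    {P : probability T R} {X : {RV P >-> R}} {a b : R} :
  (forall x, rv_support X x -> a <= x) -> (forall x, rv_support X x -> x <= b) ->
  {ae P, forall w, a <= X w <= b}.
Proof.
move=> supp_ge supp_le.
have [B [mB PB0 sB]] :=
  negligibleU (negligible_itvNyo_off_support (distribution P X) a supp_ge)
              (negligible_itvoy_off_support (distribution P X) b supp_le).
exists (X @^-1` B); split => //; first exact: measurable_funPTI.
move=> w /= /negP; rewrite negb_and -!ltNge => /orP out; apply: sB.
by case: out => [Xa|bX]; [left|right]; rewrite /= in_itv/= ?Xa ?bX.
Qed.

Lemma measurable_inv {R : realType} : measurable_fun [set: R] GRing.inv.
Proof.
have -> : GRing.inv = (fun x : R => x * `|x| `^ (-2)).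
  apply: boolp.funext => x; have [->|x0] := eqVneq x 0; first by rewrite invr0 mul0r.
  by rewrite powR_invn // real_normK ?num_real // expr2 invfM mulrA divff ?mul1r.
apply: measurable_funM => //.
exact: measurableT_comp (measurable_powR (-2)) (@normr_measurable R setT).
Qed.

Section waiting_time.
Context {R : realType}.
Implicit Types mu x q : R.

Lemma measurable_Wsys mu q : measurable_fun [set: R] (fun x => Wsys mu (q * x)).
Proof.
apply: measurable_funM => //; apply: measurableT_comp measurable_inv _.
by apply: measurable_funB => //; exact: mulrl_measurable.
Qed.

Lemma Wsys_bounds mu lmax q x : lmax < mu -> 0 <= q <= 1 -> 0 <= x <= lmax ->
  mu^-1 <= Wsys mu (q * x) <= (mu - lmax)^-1.
Proof.
move=> lmu /andP[q0 q1] /andP[x0 xl].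
have qx0 : 0 <= q * x by rewrite mulr_ge0.
have qxl : q * x <= lmax by apply: le_trans (ler_piMl x0 q1) xl.
rewrite /Wsys div1r !lef_pV2 ?posrE ?subr_gt0 ?gerBl ?lerB //; lra.
Qed.

Lemma Wsys_increment {mu lmax qe q x} :
  lmax < mu -> 0 <= qe <= q -> q <= 1 -> 0 <= x <= lmax ->
  Wsys mu (qe * x) + (q - qe) * ((mu - lmax) / mu) * (Wsys mu x - mu^-1)
  <= Wsys mu (q * x).
Proof.
move=> lmu /andP[qe0 qeq] q1 /andP[x0 xl].
have mu_gt0 : 0 < mu by lra.
have qx : q * x <= x by exact: ler_piMl.
have qex : qe * x <= q * x by rewrite ler_wpM2r.
have qex0 : 0 <= qe * x by rewrite mulr_ge0.
have [mqx mqex mx] : [/\ 0 < mu - q * x, 0 < mu - qe * x & 0 < mu - x] by split; lra.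
have gap1 : (mu - lmax) / mu * (Wsys mu x - mu^-1) <= x / mu ^+ 2.
  have -> : (mu - lmax) / mu * (Wsys mu x - mu^-1)
      = (mu - lmax) / (mu - x) * (x / mu ^+ 2).
    by rewrite /Wsys; field; rewrite !gt_eqF.
  apply: ler_piMl; first by rewrite divr_ge0 ?exprn_ge0 // ltW.
  by rewrite ler_pdivrMr // mul1r; lra.
have gap2 : (q - qe) * (x / mu ^+ 2) <= Wsys mu (q * x) - Wsys mu (qe * x).
  have -> : Wsys mu (q * x) - Wsys mu (qe * x)
      = (q - qe) * (x / ((mu - q * x) * (mu - qe * x))).
    by rewrite /Wsys; field; rewrite !gt_eqF.
  rewrite ler_wpM2l ?subr_ge0 // ler_wpM2l // lef_pV2 ?posrE ?mulr_gt0 ?exprn_gt0 //.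
  by rewrite expr2 ler_pM //; lra.
rewrite addrC -lerBrDr; apply: le_trans gap2.
by rewrite -mulrA ler_wpM2l // subr_ge0.
Qed.

End waiting_time.

Lemma Lfun_bounded {d} {T : measurableType d} {R : realType} (P : probability T R)
    (f : T -> R) (M : R) :
  measurable_fun [set: T] f -> (forall w, `|f w| <= M) -> f \in Lfun P 1.
Proof.
move=> mf fM; apply/Lfun1_integrable; apply: measurable_bounded_integrable => //.
  by apply: le_lt_trans (probability_le1 P measurableT) _; rewrite ltry.
exists M; split; first exact: num_real.
by move=> N MN w _; apply: le_trans (fM w) (ltW MN).
Qed.

Section expected_waiting_time.
Context {d} {T : measurableType d} {R : realType} {P : probability T R}.
Context {mu lmax : R} {Y : T -> R}.
Hypotheses (lmu : lmax < mu) (mY : measurable_fun [set: T] Y)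
  (Y_itv : forall w, 0 <= Y w <= lmax).

Let W q w := Wsys mu (q * Y w).

Definition meanW q := fine 'E_P[fun w => Wsys mu (q * Y w)].

Let mu_gt0 : 0 < mu.
Proof.
have /andP[Y0 Yl] := Y_itv point.
by apply: le_lt_trans lmu; exact: le_trans Yl.
Qed.

Let W_bounds q w : 0 <= q <= 1 -> mu^-1 <= W q w <= (mu - lmax)^-1.
Proof. by move=> q01; apply: Wsys_bounds. Qed.

Let mW q : measurable_fun [set: T] (W q).
Proof. exact: measurableT_comp (measurable_Wsys mu q) mY. Qed.

Let Lfun_W q : 0 <= q <= 1 -> W q \in Lfun P 1.
Proof.
move=> q01; apply: (Lfun_bounded P _ (mu - lmax)^-1 (mW q)) => w.
have /andP[Wlo Whi] := W_bounds q w q01.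
by rewrite ger0_norm // (le_trans _ Wlo) // ltW // invr_gt0.
Qed.

Let expectation_W q : 0 <= q <= 1 -> ('E_P[W q] = (meanW q)%:E)%E.
Proof. by move=> q01; rewrite fineK // expectation_fin_num // Lfun_W. Qed.

Lemma expectation_revenue (Rw C q : R) : 0 <= q <= 1 ->
  ('E_P[fun w => (Rw - C * Wsys mu (q * Y w))%R] = (Rw - C * meanW q)%:E)%E.
Proof.
move=> q01; have -> : (fun w => Rw - C * W q w) = cst Rw \- C \o* W q.
  by apply: boolp.funext => w /=; rewrite mulrC.
rewrite expectationB ?Lfun_cst ?Lfun_scale ?Lfun_W //.
by rewrite expectation_cst (expectationZl (X := W q)) ?Lfun_W // expectation_W.
Qed.

Lemma meanW_increment {qe q} : 0 <= qe <= q -> q <= 1 ->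
  meanW qe + (q - qe) * ((mu - lmax) / mu) * (meanW 1 - mu^-1) <= meanW q.
Proof.
move=> qe_le_q q1; have /andP[qe0 qeq] := qe_le_q.
have qe01 : 0 <= qe <= 1 by rewrite qe0 (le_trans qeq q1).
have q01 : 0 <= q <= 1 by rewrite q1 (le_trans qe0 qeq).
have one01 : 0 <= (1 : R) <= 1 by rewrite ler01 lexx.
set k := (q - qe) * ((mu - lmax) / mu).
have k0 : 0 <= k by rewrite mulr_ge0 ?subr_ge0 // divr_ge0 ?subr_ge0 // ltW.
have L1 : W 1 \- cst mu^-1 \in Lfun P 1 by rewrite rpredB ?Lfun_W ?Lfun_cst.
have Llo : W qe \+ k \o* (W 1 \- cst mu^-1) \in Lfun P 1.
  by rewrite rpredD ?Lfun_W ?Lfun_scale.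
have Wmin q' w : 0 <= q' <= 1 -> 0 <= W q' w - mu^-1.
  by move=> /(W_bounds q' w) /andP[+ _]; rewrite subr_ge0.
have W_ge0 q' w : 0 <= q' <= 1 -> 0 <= W q' w.
  by move=> /(Wmin q' w); rewrite subr_ge0; apply: le_trans; rewrite invr_ge0 ltW.
have : ('E_P[(W qe \+ k \o* (W 1 \- cst mu^-1))%R] <= 'E_P[W q])%E.
  apply: expectation_le.
  - by have := sub_Lfun_mfun Llo; rewrite inE.
  - exact: mW.
  - by move=> w; apply: addr_ge0; [exact: W_ge0|exact: mulr_ge0 (Wmin 1 w one01) k0].
  - by move=> w; exact: W_ge0.
  - apply: aeW => w /=; rewrite mulrC.
    by rewrite /W mul1r; exact: Wsys_increment lmu qe_le_q q1 (Y_itv w).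
rewrite expectationD ?Lfun_W ?Lfun_scale // (expectationZl (X := W 1 \- cst mu^-1)) //.
rewrite expectationB ?Lfun_W ?Lfun_cst // expectation_cst !expectation_W //.
Qed.

Lemma meanW_lt {qe q} : mu^-1 < meanW 1 -> 0 <= qe -> qe < q -> q <= 1 ->
  meanW qe < meanW q.
Proof.
move=> W1_gt qe0 qe_lt_q q1.
have qe_le_q : 0 <= qe <= q by rewrite qe0 ltW.
apply: (lt_le_trans _ (meanW_increment qe_le_q q1)); rewrite ltrDl.
by rewrite !mulr_gt0 ?divr_gt0 ?invr_gt0 ?subr_gt0.
Qed.

End expected_waiting_time.
Arguments meanW {d T R} P mu Y q.

Section almost_sure_modification.
Context {d} {T : measurableType d} {R : realType}.

Lemma ae_itv_modification {mu : {measure set T -> \bar R}} {X : T -> R} {a b : R} :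
  a <= b -> measurable_fun [set: T] X -> {ae mu, forall w, a <= X w <= b} ->
  exists Y : T -> R, [/\ measurable_fun [set: T] Y, forall w, a <= Y w <= b
                       & {ae mu, forall w, X w = Y w}].
Proof.
move=> ab mX Xab; exists (fun w => Num.min (Num.max (X w) a) b); split.
- by apply: measurable_minr => //; exact: measurable_maxr.
- by move=> w; rewrite le_min ge_min le_max !lexx ab !orbT.
- by apply: (filterS _ Xab) => w /andP[aX Xb]; rewrite max_l // min_l.
Qed.

Lemma expectation_ae_eq {P : probability T R} {F : R -> R} {X Y : T -> R} :
  measurable_fun [set: R] F -> measurable_fun [set: T] X ->
  measurable_fun [set: T] Y -> {ae P, forall w, X w = Y w} ->
  ('E_P[F \o X] = 'E_P[F \o Y])%E.
Proof.
move=> mF mX mY XY; rewrite unlock; apply: ae_eq_integral => //.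
- exact/measurable_EFinP/measurableT_comp.
- exact/measurable_EFinP/measurableT_comp.
- by apply: (filterS _ XY) => w /= ->.
Qed.

End almost_sure_modification.

Theorem proposition1 (d : measure_display) (T : measurableType d) (R : realType)
  (P : probability T R) (Lam : {RV P >-> R})
  (lam mu Rw C lmin lmax : R) :
  0 < lam -> 0 < C -> C / mu <= Rw ->
  0 <= lmin -> lmin < lam -> lam < lmax -> lmax < mu ->
  rv_support Lam lmin -> (forall x, rv_support Lam x -> lmin <= x) ->
  rv_support Lam lmax -> (forall x, rv_support Lam x -> x <= lmax) ->
  forall qm qe : R,
  is_qSm Lam lam mu Rw C qm -> is_qSe Lam mu Rw C qe ->
  qm <= qe.
Proof.
move=> lam_gt0 C_gt0 C_mu_le_Rw lmin_ge0 lmin_lam lam_lmax lmax_mu.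
move=> _ supp_ge _ supp_le qm qe [qm01 qm_max] qe_eq.
have Lam_ae : {ae P, forall w, 0 <= Lam w <= lmax}.
  apply: (filterS _ (rv_support_ae_itv supp_ge supp_le)) => w /andP[lmin_Lam ->].
  by rewrite (le_trans lmin_ge0 lmin_Lam).
have lmax_ge0 : 0 <= lmax by rewrite (le_trans lmin_ge0) // ltW // (lt_trans lmin_lam).
have [Y [mY Y_itv LamY]] := ae_itv_modification lmax_ge0 (measurable_funPT Lam) Lam_ae.
have EW_meanW q : EW Lam mu q = meanW P mu Y q.
  by rewrite /EW (expectation_ae_eq (measurable_Wsys mu q) (measurable_funPT _) mY LamY).
have RevS_meanW q : 0 <= q <= 1 ->
    RevS Lam lam mu Rw C q = q * lam * (Rw - C * meanW P mu Y q).
  have mF : measurable_fun [set: R] (fun x => Rw - C * Wsys mu (q * x)).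
    by apply: measurable_funB => //; apply: measurable_funM => //;
       exact: measurable_Wsys.
  move=> q01; rewrite /RevS (expectation_ae_eq mF (measurable_funPT _) mY LamY).
  by rewrite (expectation_revenue lmax_mu mY Y_itv).
case: qe_eq => [[_ ->]|[]]; first by case/andP: qm01.
rewrite !EW_meanW => W1_gt [qe01 C_Wqe]; rewrite leNgt; apply/negP => qe_lt_qm.
have W1_gt_inv : mu^-1 < meanW P mu Y 1.
  by rewrite -(ltr_pM2l C_gt0); apply: le_lt_trans C_mu_le_Rw _; rewrite -subr_lt0.
have := qm_max qe qe01; rewrite !RevS_meanW // C_Wqe subrr mulr0.
have /andP[qe0 _] := qe01; have /andP[_ qm1] := qm01.
have Wqe_lt_Wqm := meanW_lt lmax_mu mY Y_itv W1_gt_inv qe0 qe_lt_qm qm1.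
rewrite pmulr_rge0; last by rewrite mulr_gt0 // (le_lt_trans qe0 qe_lt_qm).
by rewrite subr_ge0 -C_Wqe ler_pM2l // leNgt Wqe_lt_Wqm.
Qed.
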